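(* Let $A\in\mathbb{R}^{n\times n}$ and $B_u\in\mathbb{R}^{n\times l}$ be given, and let data samples $d_i=\begin{bmatrix}\hat x_i^\top & u_i^\top & \hat\eta_i^\top\end{bmatrix}^\top$, $i=1,\dots,N$, with $\hat x_i\in\mathbb{R}^n$, $u_i\in\mathbb{R}^l$, $\hat\eta_i\in\mathbb{R}^n$, be given. Let $D=\sum_{i=1}^N d_id_i^\top$ and let $\tilde D$ be a matrix with $D=\tilde D^\top\tilde D$ (e.g. a Cholesky factor). Consider the semidefinite program in the variables $P=P^\top\in\mathbb{R}^{n\times n}$, $S\in\mathbb{R}^{n\times n}$, $R\in\mathbb{R}^{n\times l}$, $W=W^\top\in\mathbb{R}^{n\times n}$: $$\min_{P,S,R,W}\ \operatorname{tr}(W)\quad\text{s.t.}\quad A^\top P+PA+S^\top+S\prec 0,\qquad \begin{bmatrix}2P & \tilde T\tilde D^\top & I\\ \star & I & 0\\ \star & \star & W\end{bmatrix}\succeq 0,\qquad P\succ 0,$$ where $\tilde T:=\begin{bmatrix} S & R & -P\end{bmatrix}$ and $\star$ denotes the blocks determined by symmetry. Let $(P^\star,S^\star,R^\star,W^\star)$ be an optimizer of this program. Set $S_{\eta_l}=I_n$, $\Theta_l=\Theta_l^\star:=(P^\star)^{-1}S^\star$ and $B_l=B_l^\star:=(P^\star)^{-1}R^\star$. Then the model $$\dot x=Ax+B_uu+S_{\eta_l}(\Theta_l x+B_l u)$$ is asymptotically stable (for $u=0$), i.e. $A+S_{\eta_l}\Theta_l^\star$ is Hurwitz, with $V(x)=x^\top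 P^\star x$ a Lyapunov function satisfying $(A+\Theta_l^\star)^\top P^\star+P^\star(A+\Theta_l^\star)\prec 0$. Moreover, the cost $$J=\sum_{i=1}^N e_i^\top e_i,\qquad e_i:=\Theta_l^\star\hat x_i+B_l^\star u_i-\hat\eta_i,$$ satisfies $J\le \operatorname{tr}(W^\star)$.
   Context: Setting: one seeks a linear uncertainty model $\eta_l(x,u)=\Theta_lx+B_lu$ to augment the known linear model $\dot x=Ax+B_uu$ as $\dot x=Ax+B_uu+S_{\eta_l}\eta_l(x,u)$, fitted to data $(\hat x_i,u_i,\hat\eta_i)$ (estimates of state, input, and uncertainty) by the quadratic cost $J=\sum_i e_i^\top e_i=\sum_i d_i^\top T^\top T d_i$ with $T=[\Theta_l\ \ B_l\ \ -I]$ and $e_i=Td_i$. Note $J=\operatorname{tr}(TDT^\top)$. A matrix is Hurwitz if all its eigenvalues have negative real part. *)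

From HB Require Import structures.
From mathcomp Require Import all_boot all_order all_algebra.
From mathcomp Require Export complex.
Set Implicit Arguments. Unset Strict Implicit. Unset Printing Implicit Defensive.
Import Order.TTheory GRing.Theory Num.Theory.
Local Open Scope ring_scope.

Section Defs.
Variable R : rcfType.

Definition posdef (n : nat) (M : 'M[R]_n) : Prop :=
  M^T = M /\ forall v : 'cV[R]_n, v != 0 -> 0 < (v^T *m M *m v) 0 0.

Definition possemidef (n : nat) (M : 'M[R]_n) : Prop :=
  M^T = M /\ forall v : 'cV[R]_n, 0 <= (v^T *m M *m v) 0 0.

Definition negdef (n : nat) (M : 'M[R]_n) : Prop := posdef (- M).

Definition cmx (m n : nat) (M : 'M[R]_(m, n)) : 'M[R[i]]_(m, n) :=
  map_mx (fun x => x%:C%C) M.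

Definition hurwitz (n : nat) (M : 'M[R]_n) : Prop :=
  forall z : R[i], eigenvalue (cmx M) z -> Re z < 0.

Definition datavec (n l : nat) (x : 'cV[R]_n) (u : 'cV[R]_l) (eta : 'cV[R]_n)
  : 'cV[R]_(n + l + n) := col_mx (col_mx x u) eta.

Definition dataD (n l N : nat) (xh : 'I_N -> 'cV[R]_n) (u : 'I_N -> 'cV[R]_l)
  (etah : 'I_N -> 'cV[R]_n) : 'M[R]_(n + l + n) :=
  \sum_(i < N) (datavec (xh i) (u i) (etah i) *m (datavec (xh i) (u i) (etah i))^T).

Definition Ttilde (n l : nat) (P S : 'M[R]_n) (Rm : 'M[R]_(n, l)) : 'M[R]_(n, n + l + n) :=
  row_mx (row_mx S Rm) (- P).

(* The LMI block matrix
   [ 2P        Tt Dt^T   I ]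
   [ Dt Tt^T   I         0 ]
   [ I         0         W ]  *)
Definition lmi_block (n l k : nat) (Dt : 'M[R]_(k, n + l + n))
  (P S : 'M[R]_n) (Rm : 'M[R]_(n, l)) (W : 'M[R]_n) : 'M[R]_(n + k + n) :=
  block_mx
    (block_mx (P *+ 2) (Ttilde P S Rm *m Dt^T) (Dt *m (Ttilde P S Rm)^T) 1%:M)
    (col_mx (1%:M : 'M[R]_n) (0 : 'M[R]_(k, n)))
    (row_mx (1%:M : 'M[R]_n) (0 : 'M[R]_(n, k)))
    W.

Definition sdp_feasible (n l k : nat) (A : 'M[R]_n) (Dt : 'M[R]_(k, n + l + n))
  (P S : 'M[R]_n) (Rm : 'M[R]_(n, l)) (W : 'M[R]_n) : Prop :=
  [/\ P^T = P, W^T = W,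
      negdef (A^T *m P + P *m A + S^T + S),
      possemidef (lmi_block Dt P S Rm W)
    & posdef P].

Definition sdp_optimal (n l k : nat) (A : 'M[R]_n) (Dt : 'M[R]_(k, n + l + n))
  (P S : 'M[R]_n) (Rm : 'M[R]_(n, l)) (W : 'M[R]_n) : Prop :=
  sdp_feasible A Dt P S Rm W /\
  forall P' S' (Rm' : 'M[R]_(n, l)) W',
    sdp_feasible A Dt P' S' Rm' W' -> \tr W <= \tr W'.

Definition costJ (n l N : nat) (Theta : 'M[R]_n) (B : 'M[R]_(n, l))
  (xh : 'I_N -> 'cV[R]_n) (u : 'I_N -> 'cV[R]_l) (etah : 'I_N -> 'cV[R]_n) : R :=
  \sum_(i < N) let e := Theta *m xh i + B *m u i - etah i in (e^T *m e) 0 0.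

End Defs.

(** Substituting [S = P Theta]
    turns the first LMI into the Lyapunov inequality
    [(A + Theta)^T P + P (A + Theta) < 0] with [P > 0]; testing it against a
    complex eigenvector [v] of [A + Theta] gives [2 Re z (v^* P v) < 0], so every
    eigenvalue [z] has negative real part.  For the cost, [P^-1 Ttilde] is the
    error map [K = [Theta Bl -I]], whence [J = tr (K D K^T)].  Conjugating the
    block LMI with [[-P^-1; Dt Ttilde^T P^-1; I]] leaves the positive
    semidefinite Schur complement [W - K Dt^T Dt K^T], whose trace is therefore
    nonnegative, i.e. [J <= tr W]. *)
From HB Require Import structures.
From mathcomp Require Import all_boot all_order all_algebra.
From mathcomp Require Import complex.
From mathcomp Require Import ring lra.
Set Implicit Arguments. Unset Strict Implicit. Unset Printing Implicit Defensive.
Import Order.TTheory GRing.Theory Num.Theory.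
Local Open Scope ring_scope.

Lemma eigenvalue_trmx (F : fieldType) n (M : 'M[F]_n) a :
  eigenvalue M^T a = eigenvalue M a.
Proof.
rewrite !eigenvalue_root_char /char_poly -det_tr; congr (root (\det _) a).
by apply/matrixP => i j; rewrite !mxE eq_sym.
Qed.

Section Lyapunov.
Variable R : rcfType.
Local Notation Re := (@complex.Re R).
Local Notation Im := (@complex.Im R).

Lemma Re_sum (I : finType) (F : I -> R[i]) : Re (\sum_i F i) = \sum_i Re (F i).
Proof. exact: (raddf_sum (Re : Rcomplex R -> R)). Qed.

Lemma Re_cquad n (Q : 'M[R]_n) (v : 'rV[R[i]]_n) :
  Re ((map_mx conjc v *m cmx Q *m v^T) 0 0) =
  (map_mx Re v *m Q *m (map_mx Re v)^T) 0 0
    + (map_mx Im v *m Q *m (map_mx Im v)^T) 0 0.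
Proof.
rewrite !mxE Re_sum -big_split; apply: eq_bigr => j _.
rewrite !mxE !big_distrl Re_sum -big_split; apply: eq_bigr => i _.
by rewrite !mxE; case: (v 0 i) => a b; case: (v 0 j) => c d; simpc => /=; ring.
Qed.

Lemma posdef_rquad_gt0 n (P : 'M[R]_n) (a : 'rV[R]_n) :
  posdef P -> a != 0 -> 0 < (a *m P *m a^T) 0 0.
Proof.
move=> [_ hP] anz; rewrite -[X in X *m P]trmxK; apply: hP.
by rewrite -(inj_eq (@trmx_inj _ _ _)) trmxK trmx0.
Qed.

Lemma posdef_rquad_ge0 n (P : 'M[R]_n) (a : 'rV[R]_n) :
  posdef P -> 0 <= (a *m P *m a^T) 0 0.
Proof.
move=> hP; have [->|anz] := eqVneq a 0; first by rewrite !mul0mx mxE.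
exact/ltW/posdef_rquad_gt0.
Qed.

Lemma posdef_cquad_gt0 n (P : 'M[R]_n) (v : 'rV[R[i]]_n) :
  posdef P -> v != 0 -> 0 < Re ((map_mx conjc v *m cmx P *m v^T) 0 0).
Proof.
move=> hP vnz; rewrite Re_cquad.
have [a0|anz] := eqVneq (map_mx Re v) 0; last first.
  exact/ltr_wpDr/posdef_rquad_gt0/anz/hP/posdef_rquad_ge0.
have bnz : map_mx Im v != 0.
  apply: contra vnz => /eqP b0; apply/eqP/matrixP => i j.
  move/matrixP/(_ i j): a0; move/matrixP/(_ i j): b0; rewrite !mxE.
  by case: (v i j) => x y /= -> ->.
exact/ltr_wpDl/posdef_rquad_gt0/bnz/hP/posdef_rquad_ge0.
Qed.

Lemma lyapunov_hurwitz n (M P : 'M[R]_n) :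
  posdef P -> negdef (M^T *m P + P *m M) -> hurwitz M.
Proof.
move=> hP hQ z; rewrite -eigenvalue_trmx => /eigenvalueP [v hv vnz].
set Q := M^T *m P + P *m M.
pose vc := map_mx conjc v; pose s := (vc *m cmx P *m v^T) 0 0.
have hvc : vc *m (cmx M)^T = (z^*)%C *: vc.
  have -> : vc *m (cmx M)^T = map_mx conjc (v *m (cmx M)^T).
    apply/matrixP => i j; rewrite !mxE rmorph_sum; apply: eq_bigr => m _.
    by rewrite !mxE rmorphM /= oppr0.
  by rewrite hv; apply/matrixP => i j; rewrite !mxE rmorphM.
have hMv : cmx M *m v^T = z *: v^T by rewrite -[cmx M]trmxK -trmx_mul hv linearZ.
have cquadQ : (vc *m cmx Q *m v^T) 0 0 = (z^*)%C * s + z * s.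
  rewrite /Q /cmx map_mxD !map_mxM -map_trmx -/(cmx M) -/(cmx P).
  rewrite mulmxDr mulmxDl !mulmxA hvc -!scalemxAl -[_ *m cmx M *m _]mulmxA hMv.
  by rewrite -scalemxAr !mxE /s !mxE.
have Re_conjMD (w t : R[i]) : Re (w^*%C * t + w * t) = 2 * Re w * Re t.
  by case: w => a b; case: t => c d; simpc => /=; ring.
have s_gt0 : 0 < Re s := posdef_cquad_gt0 hP vnz.
have := posdef_cquad_gt0 hQ vnz.
rewrite /cmx map_mxN -/(cmx Q) mulmxN mulNmx mxE raddfN /= cquadQ Re_conjMD.
by rewrite oppr_gt0 -complexRe ltcR => h; nra.
Qed.

End Lyapunov.

Lemma schur_congruence (R : comPzRingType) n k (P Pi W : 'M[R]_n)
    (X : 'M[R]_(n, k)) :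
  Pi *m P = 1%:M -> Pi^T = Pi ->
  let Z := col_mx (col_mx (- Pi) (X^T *m Pi)) (1%:M : 'M_n) in
  Z^T *m block_mx (block_mx (P *+ 2) X X^T 1%:M)
           (col_mx (1%:M : 'M[R]_n) (0 : 'M[R]_(k, n)))
           (row_mx (1%:M : 'M[R]_n) (0 : 'M[R]_(n, k))) W *m Z
  = W - Pi *m X *m X^T *m Pi.
Proof.
move=> hPi hT Z; rewrite /Z !tr_col_mx trmx1 trmx_mul trmxK hT linearN /= hT.
rewrite mul_row_block mul_row_block mul_row_col !mul1mx !mulmx1 add_row_mx.
rewrite !mul_row_col mulmx0 addr0 mulmx1 !mulNmx addNr mul0mx !addr0 mulr2n.
rewrite mulmxDr hPi mulmxN !mulmxDl !mulNmx !mul1mx mulmxDl !mul1mx.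
by rewrite !opprD !opprK addrC !addrA (addrC (-Pi) W) addrNK (addrAC W Pi) addrK.
Qed.

Lemma lyapunov_invmx (R : comUnitRingType) n (A P S : 'M[R]_n) :
  P^T = P -> P \in unitmx ->
  let Theta := invmx P *m S in
  (A + Theta)^T *m P + P *m (A + Theta) = A^T *m P + P *m A + S^T + S.
Proof.
move=> hPs hPu Theta; rewrite /Theta linearD /= trmx_mul trmx_inv hPs.
rewrite mulmxDl mulmxDr -mulmxA mulVmx // mulmx1 mulmxA mulmxV // mul1mx.
by rewrite addrACA !addrA.
Qed.

Section SDP.
Variable R : rcfType.

Lemma posdef_unitmx n (P : 'M[R]_n) : posdef P -> P \in unitmx.
Proof.
move=> hP; rewrite unitmxE unitfE; apply/negP => /det0P [v vnz hv].
by move: (posdef_rquad_gt0 hP vnz); rewrite hv mul0mx mxE ltxx.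
Qed.

Lemma possemidef_tr_congruence m p (L : 'M[R]_m) (Z : 'M[R]_(m, p)) :
  possemidef L -> 0 <= \tr (Z^T *m L *m Z).
Proof.
move=> [_ hL]; rewrite /mxtrace; apply: sumr_ge0 => i _.
have -> : (Z^T *m L *m Z) i i
    = ((delta_mx 0 i : 'rV_p) *m (Z^T *m L *m Z) *m (delta_mx i 0 : 'cV_p)) 0 0.
  by rewrite -rowE -colE !mxE.
by have := hL (Z *m delta_mx i 0); rewrite trmx_mul trmx_delta !mulmxA.
Qed.

Lemma invmx_Ttilde n l (P S : 'M[R]_n) (Rm : 'M[R]_(n, l)) :
  P \in unitmx ->
  invmx P *m Ttilde P S Rm
  = row_mx (row_mx (invmx P *m S) (invmx P *m Rm)) (- 1%:M).
Proof.
by move=> hPu; rewrite /Ttilde !mul_mx_row mulmxN mulVmx.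
Qed.

Lemma lmi_block_trace_bound n l k (Dt : 'M[R]_(k, n + l + n))
    (P S W : 'M[R]_n) (Rm : 'M[R]_(n, l)) :
  P^T = P -> P \in unitmx -> possemidef (lmi_block Dt P S Rm W) ->
  \tr (invmx P *m Ttilde P S Rm *m (Dt^T *m Dt) *m (invmx P *m Ttilde P S Rm)^T)
    <= \tr W.
Proof.
move=> hPs hPu hpsd.
set Pi := invmx P; set X := Ttilde P S Rm *m Dt^T.
have hPiT : Pi^T = Pi by rewrite /Pi trmx_inv hPs.
have hL : lmi_block Dt P S Rm W = block_mx (block_mx (P *+ 2) X X^T 1%:M)
    (col_mx (1%:M : 'M[R]_n) (0 : 'M[R]_(k, n)))
    (row_mx (1%:M : 'M[R]_n) (0 : 'M[R]_(n, k))) W.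
  by rewrite /lmi_block /X trmx_mul trmxK.
have := possemidef_tr_congruence (col_mx (col_mx (- Pi) (X^T *m Pi)) 1%:M) hpsd.
rewrite hL schur_congruence ?mulVmx // linearB /= subr_ge0.
by rewrite /X !trmx_mul hPiT trmxK !mulmxA.
Qed.

Lemma costJ_trace n l N (Theta : 'M[R]_n) (B : 'M[R]_(n, l))
    (xh : 'I_N -> 'cV[R]_n) (u : 'I_N -> 'cV[R]_l) (etah : 'I_N -> 'cV[R]_n) :
  let K := row_mx (row_mx Theta B) (- 1%:M) in
  costJ Theta B xh u etah = \tr (K *m dataD xh u etah *m K^T).
Proof.
move=> K; rewrite /dataD mulmx_sumr mulmx_suml raddf_sum; apply: eq_bigr => i _.
have -> : Theta *m xh i + B *m u i - etah i = K *m datavec (xh i) (u i) (etah i).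
  by rewrite /K /datavec !mul_row_col mulNmx mul1mx.
by rewrite /= [in RHS]mulmxA -[in RHS]mulmxA -trmx_mul mxtrace_mulC /mxtrace big_ord1.
Qed.

End SDP.

Theorem theorem1 (R : rcfType) (n l N k : nat)
  (A : 'M[R]_n) (Bu : 'M[R]_(n, l))
  (xh : 'I_N -> 'cV[R]_n) (u : 'I_N -> 'cV[R]_l) (etah : 'I_N -> 'cV[R]_n)
  (Dt : 'M[R]_(k, n + l + n))
  (hD : dataD xh u etah = Dt^T *m Dt)
  (P S W : 'M[R]_n) (Rm : 'M[R]_(n, l))
  (hopt : sdp_optimal A Dt P S Rm W) :
  let Seta : 'M[R]_n := 1%:M in
  let Theta := invmx P *m S in
  let Bl := invmx P *m Rm in
  [/\ hurwitz (A + Seta *m Theta),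
      negdef ((A + Theta)^T *m P + P *m (A + Theta))
    & costJ Theta Bl xh u etah <= \tr W].
Proof.
move=> Seta Theta Bl.
case: hopt => [[hPs _ hneg hpsd hP] _].
have hPu := posdef_unitmx hP.
have hlyap : negdef ((A + Theta)^T *m P + P *m (A + Theta)).
  by rewrite lyapunov_invmx.
split => //; first by rewrite mul1mx; exact: lyapunov_hurwitz hP hlyap.
by rewrite costJ_trace hD -invmx_Ttilde //; exact: lmi_block_trace_bound.
Qed.
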